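(* Let $\mathfrak v$ be an irreducible $C(m)$-module and $\mathfrak n=\mathfrak v\oplus\mathbb R^m$ the associated Lie algebra of Heisenberg type. Then every proper $C^+(m)$-submodule of $\mathfrak v$ (i.e. one that is non-zero and different from $\mathfrak v$) is a Lagrangian subspace of $\mathfrak v$.
   Context: $C(m)$ is the real Clifford algebra of $\mathbb R^m$ with relations $z^2=-\langle z,z\rangle1$ and $C^+(m)$ its even subalgebra, generated by products of two elements of $\mathbb R^m$. $\mathfrak v$ carries an inner product making each $J_z$ skew-symmetric, and $\mathfrak n=\mathfrak v\oplus\mathbb R^m$ has $\mathbb R^m$ central and bracket $\langle z,[u,v]\rangle=(J_zu,v)$. A Lagrangian subspace is a subspace $\mathcal L\subset\mathfrak v$ with $[\mathcal L,\mathcal L]=0$ and $\dim\mathcal L=\frac12\dim\mathfrak v$. *)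

From mathcomp Require Import all_boot all_order all_algebra.
From mathcomp Require Import reals.
Set Implicit Arguments. Unset Strict Implicit. Unset Printing Implicit Defensive.
Import GRing.Theory Num.Theory.
Local Open Scope ring_scope.

(* The module v is modelled as R^n (row vectors 'rV[R]_n) with its standard
   inner product (u, v) = u *m v^T; every finite-dimensional real inner
   product space is isometric to such a space.  The Clifford action is given
   by matrices Jb i (the action of the i-th standard basis vector of R^m),
   acting on the right: J_z u := u *m Jz Jb z. *)

Section Defs.
Variables (R : realType) (m n : nat).

Definition Jz (Jb : 'I_m -> 'M[R]_n) (z : 'rV[R]_m) : 'M[R]_n :=
  \sum_(i < m) z 0 i *: Jb i.

Definition clifford_module (Jb : 'I_m -> 'M[R]_n) : Prop :=
  forall z : 'rV[R]_m,
    Jz Jb z *m Jz Jb z = - ((z *m z^T) 0 0)%:M /\ (Jz Jb z)^T = - Jz Jb z.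

(* Subspaces of v are represented by row spaces of square matrices. *)
Definition C_submodule (Jb : 'I_m -> 'M[R]_n) (W : 'M[R]_n) : Prop :=
  forall z : 'rV[R]_m, (W *m Jz Jb z <= W)%MS.

(* C^+(m) is generated by the products J_z J_w. *)
Definition Cplus_submodule (Jb : 'I_m -> 'M[R]_n) (W : 'M[R]_n) : Prop :=
  forall z w : 'rV[R]_m, (W *m (Jz Jb z *m Jz Jb w) <= W)%MS.

Definition irreducible_C_module (Jb : 'I_m -> 'M[R]_n) : Prop :=
  (0 < n)%N /\
  forall W : 'M[R]_n, C_submodule Jb W -> \rank W = 0%N \/ \rank W = n.

(* Bracket of n = v (+) R^m : <z,[u,v]> = (J_z u, v). *)
Definition bracket_zero (Jb : 'I_m -> 'M[R]_n) (u v : 'rV[R]_n) : Prop :=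
  forall z : 'rV[R]_m, (u *m Jz Jb z *m v^T) 0 0 = 0.

Definition lagrangian (Jb : 'I_m -> 'M[R]_n) (L : 'M[R]_n) : Prop :=
  (forall u v : 'rV[R]_n, (u <= L)%MS -> (v <= L)%MS -> bracket_zero Jb u v)
  /\ (\rank L).*2 = n.

End Defs.

From mathcomp Require Import all_boot all_order all_algebra.
From mathcomp Require Import reals.
From mathcomp Require Import spectral complex.
Set Implicit Arguments.
Unset Strict Implicit.
Unset Printing Implicit Defensive.
Import GRing.Theory Num.Theory.
Local Open Scope ring_scope.

(* Fix a unit vector e.  As J_e J_z and J_z J_e lie in C^+(m), both
   W + W J_e and W :&: W J_e are C(m)-submodules; irreducibility makes W J_e a
   complement of W, so dim W = n/2.  For isotropy, the orthogonal projection P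
   onto W commutes with C^+(m), which is closed under transposition, so
   P + J_e^T P J_e - 1 is a symmetric operator commuting with C(m).  By Schur's
   lemma (a real symmetric matrix has a real eigenvalue) it is a scalar c, and
   c = 0 because it maps W into W J_e.  Hence the projection J_e^T P J_e onto
   W J_e is 1 - P: W J_e is orthogonal to W, and W J_z <= W J_e for all z. *)

Lemma mulmx_trmx_self_eq0 (R : realFieldType) k n (A : 'M[R]_(k, n)) :
  (A *m A^T == 0) = (A == 0).
Proof.
apply/eqP/eqP => [AAT0|->]; last by rewrite mul0mx.
apply/matrixP => i j; have /matrixP/(_ i i)/eqP := AAT0.
rewrite !mxE psumr_eq0 => [/allP/(_ j (mem_index_enum _))|l _].
  by rewrite mxE -expr2 sqrf_eq0 => /eqP.
by rewrite mxE -expr2 sqr_ge0.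
Qed.

Lemma gram_unitmx (R : realFieldType) k n (B : 'M[R]_(k, n)) :
  row_free B -> B *m B^T \in unitmx.
Proof.
move=> freeB; rewrite -row_free_unit -kermx_eq0; set K := kermx _.
have KB0 : K *m B *m (K *m B)^T == 0.
  by rewrite trmx_mul mulmxA -(mulmxA K) mulmx_ker mul0mx.
by rewrite mulmx_trmx_self_eq0 mulmx_free_eq0 in KB0.
Qed.

Lemma sym_mulmx_comm (R : comPzRingType) n (P M : 'M[R]_n) : P^T = P ->
  P *m M *m P = P *m M -> P *m M^T *m P = P *m M^T -> P *m M = M *m P.
Proof.
move=> PT PMP PMTP; rewrite -PMP -[RHS]trmxK trmx_mul PT -PMTP.
by rewrite !trmx_mul trmxK PT mulmxA.
Qed.

Lemma trmx_mul_skew (R : comPzRingType) n (A B : 'M[R]_n) :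
  A^T = - A -> B^T = - B -> (A *m B)^T = B *m A.
Proof. by move=> AT BT; rewrite trmx_mul AT BT mulmxN mulNmx opprK. Qed.

Section OrthogonalProjection.

Variables (R : realFieldType) (k n : nat) (W : 'M[R]_(k, n)).

Fact orthoproj_key : unit. Proof. by []. Qed.
Definition orthoproj : 'M[R]_n := locked_with orthoproj_key
  ((row_base W)^T *m invmx (row_base W *m (row_base W)^T) *m row_base W).
Canonical orthoproj_unlockable := [unlockable of orthoproj].

Lemma trmx_orthoproj : orthoproj^T = orthoproj.
Proof.
rewrite [orthoproj]unlock; move: (row_base W) => B.
by rewrite !trmx_mul trmx_inv trmx_mul !trmxK mulmxA.
Qed.

Lemma orthoproj_sub : (orthoproj <= W)%MS.
Proof. by rewrite [orthoproj]unlock -(eq_row_base W) submxMl. Qed.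

Lemma orthoproj_id p (A : 'M[R]_(p, n)) : (A <= W)%MS -> A *m orthoproj = A.
Proof.
rewrite [orthoproj]unlock -(eq_row_base W).
move: (row_base W) (row_base_free W) => B /gram_unitmx unitG /submxP[D ->].
by rewrite !mulmxA -(mulmxA D) mulmxK.
Qed.

Lemma orthoproj_comm (M : 'M[R]_n) :
  (W *m M <= W)%MS -> (W *m M^T <= W)%MS -> orthoproj *m M = M *m orthoproj.
Proof.
have PNP (N : 'M[R]_n) : (W *m N <= W)%MS ->
    orthoproj *m N *m orthoproj = orthoproj *m N.
  move=> WN; apply: orthoproj_id.
  exact: submx_trans (submxMr N orthoproj_sub) WN.
by move=> WM WMT; apply: sym_mulmx_comm; rewrite ?trmx_orthoproj ?PNP.
Qed.

End OrthogonalProjection.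

Lemma hermitian_eigenvalue_real (C : numClosedFieldType) n (A : 'M[C]_n) a :
  map_mx Num.conj A^T = A -> eigenvalue A a -> a \is Num.real.
Proof.
move=> Aherm /eigenvalueP[v vA vn0].
have v_gt0 := dotmx_is_dotmx vn0; rewrite dotmxE in v_gt0.
set w := map_mx _ _ in v_gt0; set d := (v *m w) 0 0 in v_gt0.
pose s := (v *m A *m w) 0 0.
have sE : s = a * d by rewrite /s vA -scalemxAl mxE.
have s_conj : s^* = s.
  have -> : s^* = (map_mx Num.conj (v *m A *m w)^T) 0 0 by rewrite /s !mxE.
  rewrite !trmx_mul !map_mxM Aherm map_trmx trmxK -map_mx_comp.
  by rewrite (map_mx_id conjCK) mulmxA.
have d_real : d^* = d by rewrite conj_Creal // gtr0_real.
rewrite CrealE; apply/eqP/(mulIf (lt0r_neq0 v_gt0)).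
by rewrite -sE -s_conj sE rmorphM -[in LHS]d_real.
Qed.

Lemma symmetric_eigenvalue (R : rcfType) n (T : 'M[R]_n) :
  (0 < n)%N -> T^T = T -> exists a, eigenvalue T a.
Proof.
move=> n_gt0 Tsym; set Tc := map_mx (real_complex R) T.
have [a Tc_a] := eigenvalue_closed Tc n_gt0.
have /complex_realP[r a_r] : a \is Num.real.
  apply: hermitian_eigenvalue_real Tc_a; rewrite map_trmx Tsym -map_mx_comp.
  apply: eq_map_mx => x /=; rewrite conj_Creal //.
  by apply/complex_realP; exists x.
exists r; move: Tc_a.
by rewrite a_r !eigenvalue_root_char -map_char_poly fmorph_root.
Qed.

Section CliffordModule.

Variables (R : realType) (m n : nat) (Jb : 'I_m -> 'M[R]_n).
Hypothesis Cl : clifford_module Jb.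

Local Notation J := (Jz Jb).

Lemma tr_Jz z : (J z)^T = - J z.
Proof. by case: (Cl z). Qed.

Lemma Jz_sqr z : J z *m J z = - ((z *m z^T) 0 0)%:M.
Proof. by case: (Cl z). Qed.

Lemma symmetric_commutant_scalar (T : 'M[R]_n) :
  irreducible_C_module Jb -> T^T = T -> (forall z, T *m J z = J z *m T) ->
  exists c, T = c%:M.
Proof.
case=> n_gt0 irr Tsym TJ.
have [c /eigenvalueP[x xT xn0]] := symmetric_eigenvalue n_gt0 Tsym.
exists c; apply/eqP; rewrite -subr_eq0 -mxrank_eq0.
have : C_submodule Jb (T - c%:M).
  by move=> z; rewrite mulmxBl TJ -scalar_mxC -mulmxBr submxMl.
case/irr => [-> // | full].
have : x *m (T - c%:M) == 0 by rewrite mulmxBr xT mul_mx_scalar subrr.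
by rewrite mulmx_free_eq0 ?(negPf xn0) // /row_free full.
Qed.

Variable e : 'rV[R]_m.
Hypothesis e_unit : (e *m e^T) 0 0 = 1.

Local Notation E := (J e).

Lemma Je_sqr : E *m E = - 1%:M.
Proof. by rewrite Jz_sqr e_unit. Qed.

Lemma mulmx_Je_tr : E *m E^T = 1%:M.
Proof. by rewrite tr_Jz mulmxN Je_sqr opprK. Qed.

Lemma mulmx_tr_Je : E^T *m E = 1%:M.
Proof. by rewrite tr_Jz mulNmx Je_sqr opprK. Qed.

Variable W : 'M[R]_n.
Hypothesis W_Cplus : Cplus_submodule Jb W.

Lemma Cplus_Jz_sub z : (W *m J z <= W *m E)%MS.
Proof.
rewrite -[W *m J z]mulmx1 -mulmx_Je_tr mulmxA tr_Jz mulmxN eqmx_opp.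
by rewrite submxMr // -mulmxA W_Cplus.
Qed.

Lemma Cplus_Je_Jz_sub z : (W *m E *m J z <= W)%MS.
Proof. by rewrite -mulmxA W_Cplus. Qed.

Lemma C_submodule_sum_Je : C_submodule Jb (W + W *m E)%MS.
Proof.
move=> z; rewrite addsmxMr addsmx_sub.
rewrite (submx_trans (Cplus_Jz_sub z) (addsmxSr _ _)).
by rewrite (submx_trans (Cplus_Je_Jz_sub z) (addsmxSl _ _)).
Qed.

Lemma C_submodule_cap_Je : C_submodule Jb (W :&: W *m E)%MS.
Proof.
move=> z; rewrite sub_capmx.
rewrite (submx_trans (submxMr _ (capmxSr _ _)) (Cplus_Je_Jz_sub z)).
by rewrite (submx_trans (submxMr _ (capmxSl _ _)) (Cplus_Jz_sub z)).
Qed.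

Hypothesis irr : irreducible_C_module Jb.
Hypotheses (W_neq0 : (0 < \rank W)%N) (W_proper : (\rank W < n)%N).

Lemma cap_Je_eq0 : (W :&: W *m E)%MS = 0.
Proof.
apply/eqP; rewrite -mxrank_eq0.
case: (irr.2 _ C_submodule_cap_Je) => [-> // | full].
have := mxrankS (capmxSl W (W *m E)); rewrite full => n_le_W.
by move: W_proper; rewrite ltnNge n_le_W.
Qed.

Lemma rank_sum_Je : \rank (W + W *m E) = n.
Proof.
case: (irr.2 _ C_submodule_sum_Je) => // sum0.
by move: W_neq0; rewrite lt0n -leqn0 -sum0 mxrankS ?addsmxSl.
Qed.

Lemma rank_Cplus_submodule : (\rank W).*2 = n.
Proof.
have E_free : row_free E.
  by rewrite row_free_unit; case: (mulmx1_unit mulmx_Je_tr).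
have := mxrank_sum_cap W (W *m E).
by rewrite rank_sum_Je cap_Je_eq0 mxrank0 addn0 mxrankMfree // addnn.
Qed.

Local Notation P := (orthoproj W).
Local Notation Q := (E^T *m P *m E).

Lemma orthoproj_Cplus_comm z w : P *m (J z *m J w) = (J z *m J w) *m P.
Proof. by apply: orthoproj_comm; rewrite ?trmx_mul_skew ?tr_Jz. Qed.

Lemma orthoproj_Je_conj_comm z : (P + Q) *m J z = J z *m (P + Q).
Proof.
have PJ : P *m J z = J z *m Q.
  have EPE : E *m (P *m E^T) = E^T *m (P *m E).
    by rewrite tr_Jz !mulmxN mulNmx.
  rewrite -[in LHS](mulmx1 (J z)) -mulmx_Je_tr !mulmxA -(mulmxA P).
  by rewrite orthoproj_Cplus_comm -!mulmxA EPE.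
have QJ : Q *m J z = J z *m P.
  by rewrite -!mulmxA orthoproj_Cplus_comm !mulmxA mulmx_tr_Je mul1mx.
by rewrite mulmxDl mulmxDr PJ QJ addrC.
Qed.

Lemma orthoproj_Je_conj_sum : P + Q = 1%:M.
Proof.
have psiT : (P + Q - 1%:M)^T = P + Q - 1%:M.
  by rewrite !raddfB raddfD /= trmx1 !trmx_mul trmxK trmx_orthoproj mulmxA.
have [c psi_c] : exists c, P + Q - 1%:M = c%:M.
  apply: symmetric_commutant_scalar => // z.
  by rewrite mulmxBl mulmxBr orthoproj_Je_conj_comm mul1mx mulmx1.
suff c0 : c = 0 by apply/eqP; rewrite -subr_eq0 psi_c c0 raddf0.
set w := nz_row W; have wW : (w <= W)%MS := nz_row_sub W.
have w_neq0 : w != 0 by rewrite nz_row_eq0 -mxrank_eq0 -lt0n.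
have : (c *: w <= W :&: W *m E)%MS.
  rewrite sub_capmx scalemx_sub // -mul_mx_scalar -psi_c.
  rewrite mulmxBr mulmxDr orthoproj_id // mulmx1 addrAC subrr add0r.
  by rewrite !mulmxA submxMr // (submx_trans (submxMl _ _) (orthoproj_sub W)).
by rewrite cap_Je_eq0 submx0 scaler_eq0 (negPf w_neq0) orbF => /eqP.
Qed.

Lemma Je_orthoproj_eq0 (u : 'rV[R]_n) : (u <= W)%MS -> u *m E *m P = 0.
Proof.
move=> uW; have -> : P = 1%:M - Q by rewrite -orthoproj_Je_conj_sum addrK.
rewrite mulmxBr mulmx1 !mulmxA -(mulmxA u) mulmx_Je_tr mulmx1.
by rewrite orthoproj_id // subrr.
Qed.

Lemma Je_orthogonal (u v : 'rV[R]_n) :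
  (u <= W)%MS -> (v <= W)%MS -> u *m E *m v^T = 0.
Proof.
move=> uW vW; rewrite -(orthoproj_id vW) trmx_mul [P^T]trmx_orthoproj.
by rewrite mulmxA Je_orthoproj_eq0 // mul0mx.
Qed.

Lemma Cplus_bracket_zero (u v : 'rV[R]_n) :
  (u <= W)%MS -> (v <= W)%MS -> bracket_zero Jb u v.
Proof.
move=> uW vW z.
have /submxP[D ->] := submx_trans (submxMr (J z) uW) (Cplus_Jz_sub z).
by rewrite !mulmxA (Je_orthogonal (submxMl D W) vW) mxE.
Qed.

End CliffordModule.

Theorem theorem4p7 (R : realType) (m n : nat) (Jb : 'I_m -> 'M[R]_n)
  (hC : clifford_module Jb) (hirr : irreducible_C_module Jb)
  (W : 'M[R]_n) (hW : Cplus_submodule Jb W)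
  (hne0 : (0 < \rank W)%N) (hneV : (\rank W < n)%N) :
  lagrangian Jb W.
Proof.
case: m Jb hC hirr hW => [|m] Jb hC hirr hW.
  have : C_submodule Jb W by move=> z; rewrite /Jz big_ord0 mulmx0 sub0mx.
  by case/hirr.2 => rankW; move: hne0 hneV; rewrite rankW ?ltnn.
pose e : 'rV[R]_m.+1 := delta_mx 0 0.
have e_unit : (e *m e^T) 0 0 = 1 by rewrite trmx_delta mul_delta_mx mxE !eqxx.
split; first exact: (Cplus_bracket_zero hC e_unit hW hirr hne0 hneV).
exact: (rank_Cplus_submodule hC e_unit hW hirr hne0 hneV).
Qed.
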